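(* Let $\boldsymbol{m}\in\mathbb{N}^2$ and $\boldsymbol{\gamma}=(\gamma_1,\gamma_2)\in\mathbb{Z}^2$ with $\gamma_1\equiv\gamma_2\pmod 2$. If $\sum_{\boldsymbol{i}\in\mathrm{I}^{(\boldsymbol{m})}}w_{\boldsymbol{i}}\,\chi_{\boldsymbol{\gamma}}(\boldsymbol{i})\neq0$, then there exist $h_1,h_2\in\mathbb{Z}$ with $\gamma_1=2h_1m_1$, $\gamma_2=2h_2m_2$ and $h_1+h_2$ even. Conversely, if such $h_1,h_2$ exist, then $\sum_{\boldsymbol{i}\in\mathrm{I}^{(\boldsymbol{m})}}w_{\boldsymbol{i}}\,\chi_{\boldsymbol{\gamma}}(\boldsymbol{i})=1$.
   Context: $\mathrm{I}^{(\boldsymbol{m})}=\{(i_1,i_2)\in\mathbb{Z}^2:\ 0\le i_1\le m_1,\ -2m_2<i_2\le 2m_2,\ i_2\le0\text{ if }i_1=m_1,\ i_1+i_2\text{ even}\}$. Weights: $w_{\boldsymbol{i}}=\frac{1}{4m_1m_2}$ if $i_1=0$ and $w_{\boldsymbol{i}}=\frac{2}{4m_1m_2}$ if $0<i_1\le m_1$. For $\boldsymbol{\gamma}\in\mathbb{Z}^2$, $\chi_{\boldsymbol{\gamma}}:\mathrm{I}^{(\boldsymbol{m})}\to\mathbb{C}$, $\chi_{\boldsymbol{\gamma}}(\boldsymbol{i})=\cos\!\big(\frac{\gamma_1i_1\pi}{2m_1}\big)e^{\mathrm{i}\gamma_2i_2\pi/(2m_2)}$. *)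

From Stdlib Require Import Reals ZArith List Bool.
Import ListNotations.
Open Scope R_scope.

Definition Cx : Type := (R * R)%type.
Definition Cadd (z w : Cx) : Cx := (fst z + fst w, snd z + snd w).
Definition Cscale (r : R) (z : Cx) : Cx := (r * fst z, r * snd z).
Definition Czero : Cx := (0, 0).
Definition Cone : Cx := (1, 0).

Definition in_I (m1 m2 : nat) (i : Z * Z) : bool :=
  let (i1, i2) := i in
  ((0 <=? i1) && (i1 <=? Z.of_nat m1)
   && (- 2 * Z.of_nat m2 <? i2) && (i2 <=? 2 * Z.of_nat m2)
   && (negb (i1 =? Z.of_nat m1) || (i2 <=? 0))
   && Z.even (i1 + i2))%Z.

Definition I_list (m1 m2 : nat) : list (Z * Z) :=
  filter (in_I m1 m2)
    (list_prod (map Z.of_nat (seq 0 (S m1)))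
               (map (fun k => (Z.of_nat k - 2 * Z.of_nat m2 + 1)%Z) (seq 0 (4 * m2)))).

Definition weight (m1 m2 : nat) (i : Z * Z) : R :=
  (if (fst i =? 0)%Z then 1 else 2) / (4 * INR m1 * INR m2).

(* chi_gamma(i) = cos(g1 i1 pi/(2 m1)) * exp(I g2 i2 pi/(2 m2)) *)
Definition chi (m1 m2 : nat) (g : Z * Z) (i : Z * Z) : Cx :=
  let c := cos (IZR (fst g) * IZR (fst i) * PI / (2 * INR m1)) in
  let t := IZR (snd g) * IZR (snd i) * PI / (2 * INR m2) in
  (c * cos t, c * sin t).

Definition wsum (m1 m2 : nat) (g : Z * Z) : Cx :=
  fold_right Cadd Czero (map (fun i => Cscale (weight m1 m2 i) (chi m1 m2 g i)) (I_list m1 m2)).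

(* Sum over I^(m) row by row: row i1 = n1 consists of the i2 of parity n1 in
   (-2 m2, 2 m2] (only the non-positive ones for the last row n1 = m1), so along a row
   the angle g2 i2 PI / (2 m2) runs through an arithmetic progression of step 2t,
   t = g2 PI / (2 m2).
   - If sin t <> 0, every row sum vanishes by telescoping (orthogonality), except
     possibly the half row n1 = m1 for g2 odd; but then g1 is odd and the cosine factor
     cos (g1 PI / 2) of that row vanishes.  Hence S(g) = 0.
   - If sin t = 0, then g2 = 2 h2 m2, the second character equals (-1)^(h2 i1), and S(g)
     collapses to (1/(2 m1)) sum_{n<m1} (cos (n p) + cos ((n+1) p)) with
     p = g1 PI / (2 m1) + h2 PI.  The Dirichlet identity
       sin (p/2) * sum = cos (p/2) * sin (m1 p)
     and sin (m1 p) = 0 (g1 is even) show that a nonzero sum forces p/2 to be a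
     multiple of PI, i.e. g1 = 2 h1 m1 with h1 + h2 even; conversely p is then a multiple
     of 2 PI and every cosine equals 1, giving S(g) = 1.
   The file develops finite sums over lists, the row decomposition of I^(m), the
   trigonometric sums, the two cases above, and finally the proposition. *)

From Stdlib Require Import Reals ZArith List Lia ZifyNat Lra Bool.
Open Scope R_scope.
Definition fsum {A : Type} (l : list A) (f : A -> R) : R :=
  fold_right (fun a acc => f a + acc) 0 l.

Lemma fsum_app {A : Type} (l1 l2 : list A) (f : A -> R) :
  fsum (l1 ++ l2) f = fsum l1 f + fsum l2 f.
Proof. induction l1 as [|a l1 IH]; simpl; [|rewrite IH]; ring. Qed.

Lemma fsum_map {A B : Type} (h : A -> B) (l : list A) (f : B -> R) :
  fsum (map h l) f = fsum l (fun a => f (h a)).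
Proof. induction l as [|a l IH]; simpl; [|rewrite IH]; reflexivity. Qed.

Lemma fsum_filter {A : Type} (P : A -> bool) (l : list A) (f : A -> R) :
  fsum (filter P l) f = fsum l (fun a => if P a then f a else 0).
Proof. induction l as [|a l IH]; simpl; [ring|]. destruct (P a); simpl; rewrite IH; ring. Qed.

Lemma fsum_prod {A B : Type} (l1 : list A) (l2 : list B) (f : A * B -> R) :
  fsum (list_prod l1 l2) f = fsum l1 (fun a => fsum l2 (fun b => f (a, b))).
Proof. induction l1 as [|a l1 IH]; simpl; [ring|]. rewrite fsum_app, fsum_map, IH. ring. Qed.

Lemma fsum_ext {A : Type} (l : list A) (f g : A -> R) :
  (forall a, In a l -> f a = g a) -> fsum l f = fsum l g.
Proof.
  induction l as [|a l IH]; simpl; intros H; [reflexivity|].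
  rewrite H, IH by auto. reflexivity.
Qed.

Lemma fsum_zero {A : Type} (l : list A) (f : A -> R) :
  (forall a, In a l -> f a = 0) -> fsum l f = 0.
Proof. induction l as [|a l IH]; simpl; intros H; [reflexivity|]. rewrite H, IH by auto. ring. Qed.

Lemma fsum_plus {A : Type} (l : list A) (f g : A -> R) :
  fsum l (fun a => f a + g a) = fsum l f + fsum l g.
Proof. induction l as [|a l IH]; simpl; [|rewrite IH]; ring. Qed.

Lemma fsum_scal {A : Type} (l : list A) (c : R) (f : A -> R) :
  fsum l (fun a => c * f a) = c * fsum l f.
Proof. induction l as [|a l IH]; simpl; [|rewrite IH]; ring. Qed.

Lemma fsum_seq_last (n : nat) (f : nat -> R) :
  fsum (seq 0 (S n)) f = fsum (seq 0 n) f + f n.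
Proof. rewrite seq_S, fsum_app. simpl. ring. Qed.

Lemma fsum_const (n : nat) (c : R) : fsum (seq 0 n) (fun _ => c) = INR n * c.
Proof. induction n as [|n IH]; [simpl; ring|]. rewrite fsum_seq_last, IH, S_INR. ring. Qed.

Lemma fsum_telescope (n : nat) (b : nat -> R) :
  fsum (seq 0 n) (fun j => b (S j) - b j) = b n - b 0%nat.
Proof. induction n as [|n IH]; [simpl; ring|]. rewrite fsum_seq_last, IH. ring. Qed.

Lemma fsum_pairs (n : nat) (f : nat -> R) :
  fsum (seq 0 (2 * n)) f = fsum (seq 0 n) (fun j => f (2 * j)%nat + f (2 * j + 1)%nat).
Proof.
  induction n as [|n IH]; [simpl; ring|].
  replace (2 * S n)%nat with (S (S (2 * n))) by lia.
  rewrite !fsum_seq_last, IH. replace (S (2 * n)) with (2 * n + 1)%nat by lia. ring.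
Qed.

Lemma fsum_seq_restrict (N M : nat) (f : nat -> R) : (N <= M)%nat ->
  fsum (seq 0 M) (fun j => if Nat.ltb j N then f j else 0) = fsum (seq 0 N) f.
Proof.
  intros HNM. replace M with (N + (M - N))%nat by lia.
  rewrite seq_app, fsum_app, (fsum_zero (seq (0 + N) _)).
  - rewrite Rplus_0_r. apply fsum_ext. intros j Hj. apply in_seq in Hj.
    destruct (Nat.ltb_spec j N); [reflexivity|lia].
  - intros j Hj. apply in_seq in Hj. destruct (Nat.ltb_spec j N); [lia|reflexivity].
Qed.

(* A sum over 0..m with the end terms weighted once and the inner terms twice,
   rewritten as a sum of neighbouring pairs. *)
Lemma fsum_inner_twice (m : nat) (F : nat -> R) :
  fsum (seq 0 (S m)) (fun n => (if Nat.ltb n m then F n else 0) + (if Nat.ltb 0 n then F n else 0))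
  = fsum (seq 0 m) (fun n => F n + F (S n)).
Proof.
  rewrite fsum_plus, fsum_plus, fsum_seq_last, Nat.ltb_irrefl, (fsum_seq_restrict m m) by lia.
  replace (seq 0 (S m)) with (0%nat :: map S (seq 0 m)) by (now rewrite seq_shift).
  change (fsum (?a :: ?l) ?f) with (f a + fsum l f). rewrite fsum_map. simpl. ring.
Qed.

(* Row i1 = n1 of I^(m): the i2 of the right parity, all 2 m2 of them if n1 < m1
   and only the m2 non-positive ones if n1 = m1; row_index m2 n1 j is its j-th entry. *)
Definition row_length (m1 m2 n1 : nat) : nat := if Nat.ltb n1 m1 then (2 * m2)%nat else m2.
Definition row_index (m2 n1 j : nat) : Z :=
  (Z.of_nat (2 * j + (n1 + 1) mod 2) - 2 * Z.of_nat m2 + 1)%Z.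

Lemma in_I_row (m1 m2 n1 j r : nat) : (n1 <= m1)%nat -> (j < 2 * m2)%nat -> (r < 2)%nat ->
  in_I m1 m2 (Z.of_nat n1, (Z.of_nat (2 * j + r) - 2 * Z.of_nat m2 + 1)%Z)
  = (Nat.eqb r ((n1 + 1) mod 2) && Nat.ltb j (row_length m1 m2 n1))%bool.
Proof.
  intros Hn Hj Hr. apply eq_true_iff_eq. unfold in_I, row_length. rewrite Zeven_mod.
  destruct (Nat.ltb_spec n1 m1);
    rewrite !andb_true_iff, !orb_true_iff, negb_true_iff, Z.eqb_neq, !Z.leb_le, Z.ltb_lt,
      Z.eqb_eq, Nat.eqb_eq, Nat.ltb_lt; lia.
Qed.

Lemma row_index_parity (m2 n1 j : nat) : exists q, row_index m2 n1 j = (Z.of_nat n1 + 2 * q)%Z.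
Proof. exists ((row_index m2 n1 j - Z.of_nat n1) / 2)%Z. unfold row_index. lia. Qed.

(* Filtering the candidate list of row n1 leaves exactly its row_length entries: among each
   pair of consecutive candidates 2j, 2j+1 only the one of the right parity survives. *)
Lemma fsum_row (m1 m2 n1 : nat) (f : Z * Z -> R) : (n1 <= m1)%nat ->
  fsum (seq 0 (4 * m2)) (fun k =>
      let i := (Z.of_nat n1, (Z.of_nat k - 2 * Z.of_nat m2 + 1)%Z) in
      if in_I m1 m2 i then f i else 0)
  = fsum (seq 0 (row_length m1 m2 n1)) (fun j => f (Z.of_nat n1, row_index m2 n1 j)).
Proof.
  intros Hn. replace (4 * m2)%nat with (2 * (2 * m2))%nat by lia. rewrite fsum_pairs.
  rewrite <- (fsum_seq_restrict (row_length m1 m2 n1) (2 * m2))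
    by (unfold row_length; destruct (Nat.ltb n1 m1); lia).
  apply fsum_ext. intros j Hj. apply in_seq in Hj. cbv zeta.
  pose proof (in_I_row m1 m2 n1 j 0 Hn) as Heven. rewrite Nat.add_0_r in Heven.
  rewrite Heven, (in_I_row m1 m2 n1 j 1) by lia. unfold row_index.
  assert (Hr : ((n1 + 1) mod 2 = 0 \/ (n1 + 1) mod 2 = 1)%nat) by lia.
  destruct (Nat.ltb j (row_length m1 m2 n1)), Hr as [-> | ->];
    cbn [Nat.eqb andb]; rewrite ?Nat.add_0_r; ring.
Qed.

Lemma fsum_I (m1 m2 : nat) (f : Z * Z -> R) :
  fsum (I_list m1 m2) f =
  fsum (seq 0 (S m1)) (fun n1 =>
    fsum (seq 0 (row_length m1 m2 n1)) (fun j => f (Z.of_nat n1, row_index m2 n1 j))).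
Proof.
  unfold I_list. rewrite fsum_filter, fsum_prod, fsum_map. apply fsum_ext.
  intros n1 Hn1. apply in_seq in Hn1. rewrite fsum_map. apply fsum_row. lia.
Qed.

Lemma wsum_components (m1 m2 : nat) (g : Z * Z) :
  wsum m1 m2 g =
  (fsum (I_list m1 m2) (fun i => weight m1 m2 i * fst (chi m1 m2 g i)),
   fsum (I_list m1 m2) (fun i => weight m1 m2 i * snd (chi m1 m2 g i))).
Proof. unfold wsum. induction (I_list m1 m2) as [|i l IH]; simpl; [|rewrite IH]; reflexivity. Qed.

Lemma sin_2kPI (z : Z) : sin (2 * IZR z * PI) = 0.
Proof. apply sin_eq_0_1. exists (2 * z)%Z. rewrite mult_IZR. ring. Qed.

Lemma cos_2kPI (z : Z) : cos (2 * IZR z * PI) = 1.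
Proof.
  replace (2 * IZR z * PI) with (2 * (IZR z * PI)) by ring.
  rewrite cos_2a_sin, sin_eq_0_1 by eauto. ring.
Qed.

Lemma sin_add_2kPI (x : R) (z : Z) : sin (x + 2 * IZR z * PI) = sin x.
Proof. rewrite sin_plus, sin_2kPI, cos_2kPI. ring. Qed.

Lemma cos_add_2kPI (x : R) (z : Z) : cos (x + 2 * IZR z * PI) = cos x.
Proof. rewrite cos_plus, sin_2kPI, cos_2kPI. ring. Qed.

Lemma angle_int_multiple (m : nat) (g k : Z) : (1 <= m)%nat ->
  IZR g * PI / (2 * INR m) = IZR k * PI -> g = (2 * k * Z.of_nat m)%Z.
Proof.
  intros Hm Hk. assert (HM : INR m <> 0) by (apply not_0_INR; lia).
  apply eq_IZR. rewrite !mult_IZR, <- INR_IZR_INZ.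
  replace (IZR g) with (IZR g * PI / (2 * INR m) * (2 * INR m) / PI)
    by (field; split; [exact HM | exact PI_neq0]).
  rewrite Hk. field. exact PI_neq0.
Qed.

(* Sums of cosines and sines along an arithmetic progression a, a + 2t, a + 4t, ...,
   obtained by telescoping 2 sin t cos x = sin (x + t) - sin (x - t). *)
Lemma arith_prog_cos (a t : R) (n : nat) :
  2 * sin t * fsum (seq 0 n) (fun j => cos (a + 2 * INR j * t)) =
  sin (a - t + 2 * INR n * t) - sin (a - t).
Proof.
  set (b := fun j => sin (a - t + 2 * INR j * t)).
  rewrite <- fsum_scal, (fsum_ext _ _ (fun j => b (S j) - b j)), fsum_telescope.
  - unfold b. simpl INR. rewrite Rmult_0_r, Rmult_0_l, Rplus_0_r. reflexivity.
  - intros j _. unfold b. rewrite S_INR. set (x := a + 2 * INR j * t).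
    replace (a - t + 2 * (INR j + 1) * t) with (x + t) by (unfold x; ring).
    replace (a - t + 2 * INR j * t) with (x - t) by (unfold x; ring).
    rewrite sin_plus, sin_minus. ring.
Qed.

Lemma arith_prog_sin (a t : R) (n : nat) :
  2 * sin t * fsum (seq 0 n) (fun j => sin (a + 2 * INR j * t)) =
  cos (a - t) - cos (a - t + 2 * INR n * t).
Proof.
  set (b := fun j => - cos (a - t + 2 * INR j * t)).
  rewrite <- fsum_scal, (fsum_ext _ _ (fun j => b (S j) - b j)), fsum_telescope.
  - unfold b. simpl INR. rewrite Rmult_0_r, Rmult_0_l, Rplus_0_r. ring.
  - intros j _. unfold b. rewrite S_INR. set (x := a + 2 * INR j * t).
    replace (a - t + 2 * (INR j + 1) * t) with (x + t) by (unfold x; ring).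
    replace (a - t + 2 * INR j * t) with (x - t) by (unfold x; ring).
    rewrite cos_plus, cos_minus. ring.
Qed.

Lemma arith_prog_vanish (a t : R) (n : nat) (z : Z) :
  sin t <> 0 -> INR n * t = IZR z * PI ->
  fsum (seq 0 n) (fun j => cos (a + 2 * INR j * t)) = 0 /\
  fsum (seq 0 n) (fun j => sin (a + 2 * INR j * t)) = 0.
Proof.
  intros Hs Hn. pose proof (arith_prog_cos a t n) as Hc. pose proof (arith_prog_sin a t n) as Hsn.
  assert (Hperiod : 2 * INR n * t = 2 * IZR z * PI) by (rewrite Rmult_assoc, Hn; ring).
  rewrite Hperiod in Hc, Hsn.
  rewrite sin_add_2kPI in Hc. rewrite cos_add_2kPI in Hsn.
  split; apply (Rmult_eq_reg_l (2 * sin t)); lra.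
Qed.

Lemma dirichlet_pairs (m : nat) (p : R) :
  sin (p / 2) * fsum (seq 0 m) (fun n => cos (INR n * p) + cos (INR (S n) * p))
  = cos (p / 2) * sin (INR m * p).
Proof.
  set (b := fun n => cos (p / 2) * sin (INR n * p)).
  rewrite <- fsum_scal, (fsum_ext _ _ (fun n => b (S n) - b n)), fsum_telescope.
  - unfold b. simpl INR. rewrite Rmult_0_l, sin_0. ring.
  - intros n _. unfold b. rewrite S_INR. set (h := p / 2). set (x := INR n * p + h).
    replace (INR n * p) with (x - h) by (unfold x; ring).
    replace ((INR n + 1) * p) with (x + h) by (unfold x, h; field).
    rewrite cos_plus, cos_minus, sin_plus, sin_minus. ring.
Qed.

Definition angle (m : nat) (g i : Z) : R := IZR g * IZR i * PI / (2 * INR m).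

Definition row_weight (m1 m2 n1 : nat) : R :=
  (if Nat.eqb n1 0 then 1 else 2) / (4 * INR m1 * INR m2).

(* The weighted sum row by row: the first character factor and the weight are constant
   along a row, so each row contributes them times a row sum of the second factor. *)
Lemma wsum_rows (m1 m2 : nat) (g1 g2 : Z) :
  wsum m1 m2 (g1, g2) =
  (fsum (seq 0 (S m1)) (fun n1 => row_weight m1 m2 n1 * cos (angle m1 g1 (Z.of_nat n1)) *
     fsum (seq 0 (row_length m1 m2 n1)) (fun j => cos (angle m2 g2 (row_index m2 n1 j)))),
   fsum (seq 0 (S m1)) (fun n1 => row_weight m1 m2 n1 * cos (angle m1 g1 (Z.of_nat n1)) *
     fsum (seq 0 (row_length m1 m2 n1)) (fun j => sin (angle m2 g2 (row_index m2 n1 j))))).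
Proof.
  assert (Hw : forall n1 i2, weight m1 m2 (Z.of_nat n1, i2) = row_weight m1 m2 n1).
  { intros n1 i2. unfold weight, row_weight. simpl fst.
    destruct (Z.eqb_spec (Z.of_nat n1) 0), (Nat.eqb_spec n1 0); lia || reflexivity. }
  rewrite wsum_components, !fsum_I. f_equal; apply fsum_ext; intros n1 _;
    rewrite <- fsum_scal; apply fsum_ext; intros j _; rewrite Hw; unfold chi, angle; simpl; ring.
Qed.

Lemma row_angle_progression (m2 n1 j : nat) (g2 : Z) :
  angle m2 g2 (row_index m2 n1 j) =
  IZR (row_index m2 n1 0) * (IZR g2 * PI / (2 * INR m2)) + 2 * INR j * (IZR g2 * PI / (2 * INR m2)).
Proof.
  assert (Hidx : IZR (row_index m2 n1 j) = IZR (row_index m2 n1 0) + 2 * INR j).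
  { rewrite INR_IZR_INZ, <- mult_IZR, <- plus_IZR. f_equal. unfold row_index. lia. }
  unfold angle. rewrite Hidx. unfold Rdiv. ring.
Qed.

Lemma row_sums_vanish (m2 n1 L : nat) (g2 z : Z) :
  sin (IZR g2 * PI / (2 * INR m2)) <> 0 ->
  INR L * (IZR g2 * PI / (2 * INR m2)) = IZR z * PI ->
  fsum (seq 0 L) (fun j => cos (angle m2 g2 (row_index m2 n1 j))) = 0 /\
  fsum (seq 0 L) (fun j => sin (angle m2 g2 (row_index m2 n1 j))) = 0.
Proof.
  intros Hs HL.
  rewrite !(fsum_ext (seq 0 L) _ _ (fun j _ => f_equal _ (row_angle_progression m2 n1 j g2))).
  exact (arith_prog_vanish _ _ L z Hs HL).
Qed.

(* Full rows
   cancel over a full period; the half row i1 = m1 cancels over a half period when g2 is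
   even, and otherwise g1 is odd and its cosine factor cos (g1 PI / 2) vanishes. *)
Lemma wsum_vanishes (m1 m2 : nat) (g1 g2 : Z) : (1 <= m1)%nat -> (1 <= m2)%nat ->
  (g1 mod 2 = g2 mod 2)%Z -> sin (IZR g2 * PI / (2 * INR m2)) <> 0 ->
  wsum m1 m2 (g1, g2) = Czero.
Proof.
  intros hm1 hm2 hg Hs.
  assert (HM1 : INR m1 <> 0) by (apply not_0_INR; lia).
  assert (HM2 : INR m2 <> 0) by (apply not_0_INR; lia).
  assert (Hrow : forall n1, (n1 <= m1)%nat ->
     cos (angle m1 g1 (Z.of_nat n1)) = 0 \/
     (fsum (seq 0 (row_length m1 m2 n1)) (fun j => cos (angle m2 g2 (row_index m2 n1 j))) = 0 /\
      fsum (seq 0 (row_length m1 m2 n1)) (fun j => sin (angle m2 g2 (row_index m2 n1 j))) = 0)).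
  { intros n1 Hn1. unfold row_length. destruct (Nat.ltb_spec n1 m1).
    - right. apply (row_sums_vanish _ _ _ _ g2 Hs).
      rewrite mult_INR. simpl INR. field. exact HM2.
    - destruct (Z.eq_dec (g2 mod 2) 0) as [Heven | Hodd].
      + right. apply (row_sums_vanish _ _ _ _ (g2 / 2) Hs).
        replace (IZR g2) with (2 * IZR (g2 / 2)) by (rewrite <- mult_IZR; f_equal; lia).
        field. exact HM2.
      + left. replace n1 with m1 by lia. apply cos_eq_0_1. exists (g1 / 2)%Z. unfold angle.
        replace (IZR g1) with (2 * IZR (g1 / 2) + 1)
          by (rewrite <- mult_IZR, <- plus_IZR; f_equal; lia).
        rewrite <- INR_IZR_INZ. field. exact HM1. }
  rewrite wsum_rows. unfold Czero. f_equal; apply fsum_zero; intros n1 Hn1; apply in_seq in Hn1;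
    destruct (Hrow n1 ltac:(lia)) as [Hc | [Hcos Hsin]].
  all: rewrite ?Hc, ?Hcos, ?Hsin; ring.
Qed.

Lemma row_total_weight (m1 m2 n1 : nat) : (1 <= m1)%nat -> (1 <= m2)%nat -> (n1 <= m1)%nat ->
  row_weight m1 m2 n1 * INR (row_length m1 m2 n1) =
  ((if Nat.ltb n1 m1 then 1 else 0) + (if Nat.ltb 0 n1 then 1 else 0)) / (2 * INR m1).
Proof.
  intros hm1 hm2 Hn.
  assert (HM1 : INR m1 <> 0) by (apply not_0_INR; lia).
  assert (HM2 : INR m2 <> 0) by (apply not_0_INR; lia).
  unfold row_weight, row_length.
  destruct (Nat.eqb_spec n1 0), (Nat.ltb_spec n1 m1), (Nat.ltb_spec 0 n1); try lia;
    rewrite ?mult_INR; simpl INR; field; auto.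
Qed.

(* For g2 = 2 h2 m2 the second character is (-1)^(h2 i2) = (-1)^(h2 i1), since i2 = i1 mod 2. *)
Lemma row_angle_multiple (m2 n1 j : nat) (h2 : Z) : (1 <= m2)%nat ->
  exists z, angle m2 (2 * h2 * Z.of_nat m2) (row_index m2 n1 j)
            = IZR h2 * INR n1 * PI + 2 * IZR z * PI.
Proof.
  intros hm2. assert (HM2 : INR m2 <> 0) by (apply not_0_INR; lia).
  destruct (row_index_parity m2 n1 j) as [q Hq]. exists (h2 * q)%Z.
  unfold angle. rewrite Hq, !mult_IZR, plus_IZR, mult_IZR, <- !INR_IZR_INZ. field. exact HM2.
Qed.

Lemma wsum_collapse (m1 m2 : nat) (g1 h2 : Z) : (1 <= m1)%nat -> (1 <= m2)%nat ->
  let p := IZR g1 * PI / (2 * INR m1) + IZR h2 * PI in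
  wsum m1 m2 (g1, (2 * h2 * Z.of_nat m2)%Z) =
  (fsum (seq 0 m1) (fun n => cos (INR n * p) + cos (INR (S n) * p)) / (2 * INR m1), 0).
Proof.
  intros hm1 hm2 p. assert (HM1 : INR m1 <> 0) by (apply not_0_INR; lia).
  assert (Hsign : forall n1 : nat, sin (IZR h2 * INR n1 * PI) = 0).
  { intros n1. apply sin_eq_0_1. exists (h2 * Z.of_nat n1)%Z.
    rewrite mult_IZR, <- INR_IZR_INZ. ring. }
  rewrite wsum_rows. f_equal.
  - rewrite <- fsum_inner_twice, Rdiv_def, Rmult_comm, <- fsum_scal.
    apply fsum_ext. intros n1 Hn1. apply in_seq in Hn1.
    rewrite (fsum_ext _ _ (fun _ => cos (IZR h2 * INR n1 * PI))), fsum_const.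
    + replace (INR n1 * p) with (angle m1 g1 (Z.of_nat n1) + IZR h2 * INR n1 * PI)
        by (unfold p, angle; rewrite <- INR_IZR_INZ; field; exact HM1).
      rewrite cos_plus, Hsign.
      transitivity (row_weight m1 m2 n1 * INR (row_length m1 m2 n1) *
                    (cos (angle m1 g1 (Z.of_nat n1)) * cos (IZR h2 * INR n1 * PI))); [ring|].
      rewrite row_total_weight by lia.
      destruct (Nat.ltb n1 m1), (Nat.ltb 0 n1); field; exact HM1.
    + intros j _. destruct (row_angle_multiple m2 n1 j h2 hm2) as [z ->]. apply cos_add_2kPI.
  - apply fsum_zero. intros n1 _. rewrite (fsum_zero _ _).
    + ring.
    + intros j _. destruct (row_angle_multiple m2 n1 j h2 hm2) as [z ->].
      rewrite sin_add_2kPI. apply Hsign.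
Qed.

(* A nonzero collapsed sum forces p/2 to be a multiple of PI: by the Dirichlet identity,
   sin (p/2) times the sum equals cos (p/2) sin (m1 p), and m1 p is a multiple of PI
   when g1 is even. *)
Lemma collapsed_sum_nonzero (m1 : nat) (g1 h2 : Z) : (1 <= m1)%nat -> (g1 mod 2 = 0)%Z ->
  let p := IZR g1 * PI / (2 * INR m1) + IZR h2 * PI in
  fsum (seq 0 m1) (fun n => cos (INR n * p) + cos (INR (S n) * p)) <> 0 ->
  exists h1, g1 = (2 * h1 * Z.of_nat m1)%Z /\ Z.Even (h1 + h2).
Proof.
  intros hm1 Heven p Hne. assert (HM1 : INR m1 <> 0) by (apply not_0_INR; lia).
  assert (Hfull : sin (INR m1 * p) = 0).
  { apply sin_eq_0_1. exists (g1 / 2 + h2 * Z.of_nat m1)%Z.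
    unfold p. replace (IZR g1) with (2 * IZR (g1 / 2)) by (rewrite <- mult_IZR; f_equal; lia).
    rewrite plus_IZR, mult_IZR, <- INR_IZR_INZ. field. exact HM1. }
  assert (Hhalf : sin (p / 2) = 0).
  { pose proof (dirichlet_pairs m1 p) as Hd. rewrite Hfull, Rmult_0_r in Hd.
    destruct (Rmult_integral _ _ Hd); [assumption | contradiction]. }
  destruct (sin_eq_0_0 _ Hhalf) as [k Hk].
  exists (2 * k - h2)%Z. split; [|exists k; lia].
  apply angle_int_multiple; [exact hm1|]. rewrite minus_IZR, mult_IZR. unfold p in Hk. lra.
Qed.

(* Conversely, if g1 = 2 h1 m1 with h1 + h2 even, then p is a multiple of 2 PI and every
   cosine in the collapsed sum equals 1. *)
Lemma collapsed_sum_full (m1 : nat) (h1 h2 : Z) : (1 <= m1)%nat -> Z.Even (h1 + h2) ->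
  let p := IZR (2 * h1 * Z.of_nat m1) * PI / (2 * INR m1) + IZR h2 * PI in
  fsum (seq 0 m1) (fun n => cos (INR n * p) + cos (INR (S n) * p)) = 2 * INR m1.
Proof.
  intros hm1 [e He] p. assert (HM1 : INR m1 <> 0) by (apply not_0_INR; lia).
  assert (Hcos : forall n : nat, cos (INR n * p) = 1).
  { intros n. replace (INR n * p) with (2 * IZR (Z.of_nat n * e) * PI).
    - apply cos_2kPI.
    - unfold p. rewrite !mult_IZR, <- !INR_IZR_INZ.
      replace (IZR h2) with (2 * IZR e - IZR h1)
        by (rewrite <- mult_IZR, <- He, plus_IZR; ring).
      field. exact HM1. }
  rewrite (fsum_ext _ _ (fun _ => 2)) by (intros n _; rewrite !Hcos; ring).
  rewrite fsum_const. ring.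
Qed.

Theorem proposition9p2 (m1 m2 : nat) (g1 g2 : Z)
  (hm1 : (1 <= m1)%nat) (hm2 : (1 <= m2)%nat)
  (hg : (g1 mod 2 = g2 mod 2)%Z) :
  (wsum m1 m2 (g1, g2) <> Czero ->
     exists h1 h2 : Z, g1 = (2 * h1 * Z.of_nat m1)%Z /\ g2 = (2 * h2 * Z.of_nat m2)%Z
                       /\ Z.Even (h1 + h2)) /\
  ((exists h1 h2 : Z, g1 = (2 * h1 * Z.of_nat m1)%Z /\ g2 = (2 * h2 * Z.of_nat m2)%Z
                       /\ Z.Even (h1 + h2)) ->
     wsum m1 m2 (g1, g2) = Cone).
Proof.
  assert (HM1 : INR m1 <> 0) by (apply not_0_INR; lia).
  split.
  - intros Hne.
    destruct (Req_dec (sin (IZR g2 * PI / (2 * INR m2))) 0) as [Hs | Hs];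
      [| exfalso; exact (Hne (wsum_vanishes m1 m2 g1 g2 hm1 hm2 hg Hs))].
    destruct (sin_eq_0_0 _ Hs) as [h2 Hh2]. apply angle_int_multiple in Hh2; [|exact hm2].
    assert (Hg1 : (g1 mod 2 = 0)%Z)
      by (rewrite hg, Hh2, <- Z.mul_assoc, Z.mul_comm; apply Z_mod_mult).
    subst g2. rewrite wsum_collapse in Hne by assumption.
    destruct (collapsed_sum_nonzero m1 g1 h2 hm1 Hg1) as [h1 [Hh1 Heven]].
    + intros Hzero. apply Hne. rewrite Hzero. unfold Czero. f_equal. field. exact HM1.
    + exists h1, h2. auto.
  - intros (h1 & h2 & -> & -> & Heven).
    rewrite wsum_collapse, collapsed_sum_full by assumption.
    unfold Cone. f_equal. field. exact HM1.
Qed.
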